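(* Let $a>b>0$ be real numbers with $a/b$ irrational, and let $A,B,C$ be positive integers such that one of the following holds: (i) $A a^2+C b^2=B\,a\,b$ (equation in defect); (ii) $A a^2+B\,a\,b=C b^2$; (iii) $A a^2=C b^2$. Let $e_{-1}=a,\ e_0=b,\ e_1,e_2,\dots$ be the anthyphairetic remainders of $a$ to $b$. Then there exist an index $n\ge 0$ and positive integers $A',B',C'$ such that $A' e_n^2=B'\,e_n\,e_{n+1}+C' e_{n+1}^2$, i.e. after finitely many anthyphairetic substitutions the equation becomes a quadratic equation in excess.
   Context: For positive reals $a,b$, the anthyphairesis of $a$ to $b$ is the Euclidean subtraction algorithm: set $e_{-1}=a$, $e_0=b$, and for $i\ge 0$, as long as $e_i>0$, write $e_{i-1}=k_i e_i+e_{i+1}$ with $k_i$ a nonnegative integer and $0\le e_{i+1}<e_i$; the process stops if some remainder is $0$ (which never happens when $a/b$ is irrational). The $e_i$ are the anthyphairetic remainders. An anthyphairetic substitution replaces $e_{i-1}$ by $k_ie_i+e_{i+1}$ in a quadratic relation between $e_{i-1}$ and $e_i$, producing a quadratic relation between $e_i$ and $e_{i+1}$. *)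

From Stdlib Require Import Reals ZArith.
Open Scope R_scope.

(* One step of the anthyphairesis: (e_{i-1}, e_i) |-> (e_i, e_{i+1}),
   where e_{i-1} = k_i e_i + e_{i+1}, k_i = floor(e_{i-1}/e_i), 0 <= e_{i+1} < e_i. *)
Definition anth_step (p : R * R) : R * R :=
  let (x, y) := p in (y, x - IZR (Int_part (x / y)) * y).

(* anth_pair a b n = (e_{n-1}, e_n), starting from (e_{-1}, e_0) = (a, b). *)
Definition anth_pair (a b : R) (n : nat) : R * R := Nat.iter n anth_step (a, b).

Definition anth_rem (a b : R) (n : nat) : R := snd (anth_pair a b n).

Definition irrational (x : R) : Prop :=
  ~ exists p q : Z, q <> 0%Z /\ x = IZR p / IZR q.

(** Write the equation as a quadratic form [A x^2 + B x y + C y^2 = 0] in two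
    consecutive remainders [(x, y)].  Substituting [x = k y + z] turns it into the
    form with coefficients [(A k^2 + B k + C, 2 A k + B, A)] in [(y, z)], with
    [k >= 1] and [y, z > 0].  If the middle coefficient is nonnegative and the last
    one negative (cases (ii) and (iii)), positivity forces the new first
    coefficient to be negative, and negating gives an equation in excess.  In
    defect, the new first coefficient is nonzero by irrationality; if it is
    negative we are in excess or in the previous case, and if it is positive we
    are in defect again with a middle coefficient [2 A k + B] of strictly smaller
    absolute value, so this can happen only finitely often. *)

From Stdlib Require Import Reals ZArith Zwf Lra Lia Psatz.
Open Scope R_scope.

Lemma irrational_neq_IZR (x : R) (k : Z) : irrational x -> x <> IZR k.
Proof. intros Hx ->; apply Hx; exists k, 1%Z; split; [lia | field]. Qed.

Lemma irrational_sub_IZR (x : R) (k : Z) : irrational x -> irrational (x - IZR k).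
Proof.
  intros Hx [p [q [Hq E]]]; apply Hx.
  assert (IZR q <> 0) by (apply not_0_IZR; exact Hq).
  exists (p + k * q)%Z, q; split; [exact Hq |].
  rewrite plus_IZR, mult_IZR.
  replace x with (x - IZR k + IZR k) by ring; rewrite E; field; assumption.
Qed.

Lemma irrational_inv (x : R) : irrational x -> irrational (/ x).
Proof.
  intros Hx [p [q [Hq E]]]; apply Hx.
  assert (Hx0 : x <> 0) by exact (irrational_neq_IZR x 0 Hx).
  assert (IZR q <> 0) by (apply not_0_IZR; exact Hq).
  assert (Hp : IZR p <> 0).
  { intro Hp; rewrite Hp in E; apply (Rinv_neq_0_compat x Hx0); rewrite E; field; assumption. }
  exists q, p; split; [intros ->; exact (Hp eq_refl) |].
  rewrite <- (Rinv_inv x), E; field; split; assumption.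
Qed.

Definition anth_quot (p : R * R) : Z := Int_part (fst p / snd p).

Lemma anth_step_eq (p : R * R) :
  anth_step p = (snd p, fst p - IZR (anth_quot p) * snd p).
Proof. now destruct p. Qed.

Lemma fst_anth_step (p : R * R) : fst (anth_step p) = snd p.
Proof. now destruct p. Qed.

Definition anth_valid (p : R * R) : Prop :=
  0 < snd p < fst p /\ irrational (fst p / snd p).

Lemma anth_quot_pos (p : R * R) : anth_valid p -> (0 < anth_quot p)%Z.
Proof.
  intros [[Hy Hxy] _]; apply lt_IZR.
  destruct (base_Int_part (fst p / snd p)) as [_ Hk].
  assert (1 < fst p / snd p).
  { apply (Rmult_lt_reg_r (snd p)); [lra |].
    replace (fst p / snd p * snd p) with (fst p) by (field; lra); lra. }
  unfold anth_quot; lra.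
Qed.

Lemma anth_step_valid (p : R * R) : anth_valid p -> anth_valid (anth_step p).
Proof.
  intros [[Hy Hxy] Hirr]; rewrite anth_step_eq; unfold anth_valid; simpl.
  set (frac := fst p / snd p - IZR (anth_quot p)).
  assert (Hz : fst p - IZR (anth_quot p) * snd p = frac * snd p)
    by (unfold frac; field; lra).
  destruct (base_Int_part (fst p / snd p)) as [Hlo Hhi].
  assert (Hfrac : 0 < frac < 1).
  { assert (frac <> 0)
      by (apply (irrational_neq_IZR _ 0), irrational_sub_IZR, Hirr).
    unfold frac, anth_quot in *; lra. }
  rewrite Hz; split; [split; nra |].
  replace (snd p / (frac * snd p)) with (/ frac) by (field; lra).
  apply irrational_inv, irrational_sub_IZR, Hirr.
Qed.

Definition quad_form (A B C : Z) (p : R * R) : R :=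
  IZR A * fst p ^ 2 + IZR B * fst p * snd p + IZR C * snd p ^ 2.

Lemma quad_form_opp (A B C : Z) (p : R * R) :
  quad_form (- A) (- B) (- C) p = - quad_form A B C p.
Proof. unfold quad_form; rewrite !opp_IZR; ring. Qed.

Lemma quad_form_anth_step (A B C : Z) (p : R * R) :
  let k := anth_quot p in
  quad_form A B C p = quad_form (A * k * k + B * k + C) (2 * A * k + B) A (anth_step p).
Proof.
  cbv zeta; rewrite anth_step_eq; unfold quad_form; cbn [fst snd].
  rewrite !plus_IZR, !mult_IZR; ring.
Qed.

Section SignsOfRoots.
Variables (A B C : Z) (p : R * R).
Hypotheses (Hx : 0 < fst p) (Hy : 0 < snd p) (Hroot : quad_form A B C p = 0).
Hypothesis HC : (0 < C)%Z.

Lemma quad_root_first_neg : (0 <= B)%Z -> (A < 0)%Z.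
Proof.
  intros HB; apply lt_IZR; apply IZR_le in HB; pose proof (IZR_lt _ _ HC).
  assert (0 <= IZR B * (fst p * snd p)) by (apply Rmult_le_pos; nra).
  assert (0 < IZR C * snd p ^ 2) by (apply Rmult_lt_0_compat; nra).
  unfold quad_form in Hroot; nra.
Qed.

Lemma quad_root_middle_neg : (0 <= A)%Z -> (B < 0)%Z.
Proof.
  intros HA; apply lt_IZR; apply IZR_le in HA; pose proof (IZR_lt _ _ HC).
  assert (0 <= IZR A * fst p ^ 2) by (apply Rmult_le_pos; nra).
  assert (0 < IZR C * snd p ^ 2) by (apply Rmult_lt_0_compat; nra).
  assert (IZR B * (fst p * snd p) < 0) by (unfold quad_form in Hroot; lra).
  assert (0 < fst p * snd p) by nra.
  nra.
Qed.

End SignsOfRoots.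

Lemma quad_root_rational (B C : Z) (p : R * R) :
  0 < snd p -> C <> 0%Z -> quad_form 0 B C p = 0 -> ~ irrational (fst p / snd p).
Proof.
  intros Hy HC Hroot Hirr.
  assert (Hlin : IZR B * fst p + IZR C * snd p = 0).
  { apply (Rmult_eq_reg_r (snd p)); [| lra]; unfold quad_form in Hroot; lra. }
  destruct (Z.eq_dec B 0) as [-> | HB].
  - apply HC, eq_IZR, (Rmult_eq_reg_r (snd p)); lra.
  - assert (IZR B <> 0) by (apply not_0_IZR; exact HB).
    apply Hirr; exists (- C)%Z, B; split; [exact HB |].
    rewrite opp_IZR; field_simplify_eq; lra.
Qed.

Definition excess_eq (p : R * R) : Prop :=
  exists A B C : Z, (0 < A)%Z /\ (B < 0)%Z /\ (C < 0)%Z /\ quad_form A B C p = 0.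

Definition mixed_eq (p : R * R) : Prop :=
  exists A B C : Z, (0 < A)%Z /\ (0 <= B)%Z /\ (C < 0)%Z /\ quad_form A B C p = 0.

Definition eventually_excess (p : R * R) : Prop :=
  exists n, excess_eq (Nat.iter (S n) anth_step p).

Lemma eventually_excess_anth_step (p : R * R) :
  eventually_excess (anth_step p) -> eventually_excess p.
Proof. intros [n H]; exists (S n); rewrite Nat.iter_succ_r; exact H. Qed.

Lemma mixed_eq_anth_step (p : R * R) :
  anth_valid p -> mixed_eq p -> excess_eq (anth_step p).
Proof.
  intros Hp [A [B [C [HA [HB [HC Hroot]]]]]].
  pose proof (anth_quot_pos p Hp) as Hk.
  destruct (anth_step_valid p Hp) as [[Hy Hz] _].
  rewrite quad_form_anth_step in Hroot.
  set (k := anth_quot p) in *.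
  assert (HP : (A * k * k + B * k + C < 0)%Z)
    by (apply (quad_root_first_neg _ (2 * A * k + B) A (anth_step p)); lra || lia).
  exists (- (A * k * k + B * k + C))%Z, (- (2 * A * k + B))%Z, (- A)%Z.
  repeat split; try lia.
  rewrite quad_form_opp, Hroot; ring.
Qed.

Lemma defect_eq_anth_step (A B C : Z) (p : R * R) :
  anth_valid p -> (0 < A)%Z -> (B < 0)%Z -> (0 < C)%Z -> quad_form A B C p = 0 ->
  excess_eq (anth_step p) \/ mixed_eq (anth_step p) \/
  exists A' B', (0 < A')%Z /\ (B < B' < 0)%Z /\ quad_form A' B' A (anth_step p) = 0.
Proof.
  intros Hp HA HB HC Hroot.
  pose proof (anth_quot_pos p Hp) as Hk.
  destruct (anth_step_valid p Hp) as [[Hy Hz] Hirr].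
  rewrite quad_form_anth_step in Hroot.
  set (k := anth_quot p) in *.
  set (P := (A * k * k + B * k + C)%Z) in *.
  set (Q := (2 * A * k + B)%Z) in *.
  assert (Hneg : quad_form (- P) (- Q) (- A) (anth_step p) = 0)
    by (rewrite quad_form_opp, Hroot; ring).
  destruct (Z.lt_trichotomy P 0) as [HP | [HP | HP]].
  - destruct (Z.lt_ge_cases 0 Q) as [HQ | HQ].
    + left; exists (- P)%Z, (- Q)%Z, (- A)%Z; repeat split; lia || exact Hneg.
    + right; left; exists (- P)%Z, (- Q)%Z, (- A)%Z; repeat split; lia || exact Hneg.
  - rewrite HP in Hroot.
    exfalso; apply (quad_root_rational Q A (anth_step p)); [lra | lia | exact Hroot | exact Hirr].
  - assert (HQ : (Q < 0)%Z)
      by (apply (quad_root_middle_neg P Q A (anth_step p)); lra || lia).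
    right; right; exists P, Q; repeat split; unfold Q in *; lia || exact Hroot.
Qed.

Lemma defect_eventually_excess (A B C : Z) (p : R * R) :
  anth_valid p -> (0 < A)%Z -> (B < 0)%Z -> (0 < C)%Z -> quad_form A B C p = 0 ->
  eventually_excess p.
Proof.
  revert A C p.
  induction B as [B IH] using (well_founded_ind (Zwf_up_well_founded 0)).
  intros A C p Hp HA HB HC Hroot.
  destruct (defect_eq_anth_step A B C p Hp HA HB HC Hroot)
    as [Hexc | [Hmix | [A' [B' [HA' [HB' Hroot']]]]]].
  - exists 0%nat; exact Hexc.
  - apply eventually_excess_anth_step; exists 0%nat.
    exact (mixed_eq_anth_step _ (anth_step_valid p Hp) Hmix).
  - apply eventually_excess_anth_step.
    apply (IH B' ltac:(red; lia) A' A); [exact (anth_step_valid p Hp) | lia.. | exact Hroot'].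
Qed.

Lemma excess_eq_nat (p : R * R) :
  excess_eq p ->
  exists A B C : nat, (0 < A)%nat /\ (0 < B)%nat /\ (0 < C)%nat /\
    INR A * fst p ^ 2 = INR B * fst p * snd p + INR C * snd p ^ 2.
Proof.
  intros [A [B [C [HA [HB [HC Hroot]]]]]].
  exists (Z.to_nat A), (Z.to_nat (- B)), (Z.to_nat (- C)).
  repeat split; try lia.
  rewrite !INR_IZR_INZ, !Z2Nat.id, !opp_IZR by lia.
  unfold quad_form in Hroot; lra.
Qed.

Theorem proposition6p2p3 (a b : R) (A B C : nat) :
  0 < b -> b < a -> irrational (a / b) ->
  (0 < A)%nat -> (0 < B)%nat -> (0 < C)%nat ->
  (INR A * a ^ 2 + INR C * b ^ 2 = INR B * a * b \/
   INR A * a ^ 2 + INR B * a * b = INR C * b ^ 2 \/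
   INR A * a ^ 2 = INR C * b ^ 2) ->
  exists (n : nat) (A' B' C' : nat),
    (0 < A')%nat /\ (0 < B')%nat /\ (0 < C')%nat /\
    INR A' * anth_rem a b n ^ 2
      = INR B' * anth_rem a b n * anth_rem a b (S n)
        + INR C' * anth_rem a b (S n) ^ 2.
Proof.
  intros Hb Hab Hirr HA HB HC Hcases.
  assert (Hvalid : anth_valid (a, b)) by (repeat split; assumption).
  assert (Hev : eventually_excess (a, b)).
  { rewrite !INR_IZR_INZ in Hcases.
    destruct Hcases as [Hdefect | Hmixed].
    - apply (defect_eventually_excess (Z.of_nat A) (- Z.of_nat B) (Z.of_nat C));
        try (assumption || lia).
      unfold quad_form; cbn [fst snd]; rewrite opp_IZR; lra.
    - exists 0%nat; apply mixed_eq_anth_step; [exact Hvalid |].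
      destruct Hmixed as [Hroot | Hroot];
        [exists (Z.of_nat A), (Z.of_nat B), (- Z.of_nat C)%Z
        | exists (Z.of_nat A), 0%Z, (- Z.of_nat C)%Z];
        repeat split; try lia; unfold quad_form; cbn [fst snd]; rewrite opp_IZR; lra. }
  destruct Hev as [n Hexc].
  exists n; apply excess_eq_nat in Hexc.
  unfold anth_rem, anth_pair; cbn [Nat.iter] in Hexc |- *.
  rewrite <- (fst_anth_step (Nat.iter n anth_step (a, b))); exact Hexc.
Qed.
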